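(* Let $p$ be a prime and $V$ a vector space of dimension $d$ over $\mathbb{F}_p$. Let $G_0\le \mathrm{GL}(V)$ be a solvable group acting irreducibly and quasi-primitively on $V$, let $G=V\rtimes G_0$, and let $W$, $A$, $F$, $e$ be structure data for $G_0$ as described in the context. Then \[ \mathrm{rank}(G)\;\ge\;\left\lceil \frac{|W|^{e}-1}{\log_2(|W|)\cdot |A/F|\cdot e^2\cdot (|W|-1)}\right\rceil+1 . \]
   Context: $G=V\rtimes G_0$ is regarded as a permutation group on $V$ (translations together with the linear action of $G_0$). The rank of $G$, $\mathrm{rank}(G)$, is the number of orbits of $G_0$ on $V$, including the orbit $\{0\}$. $G_0$ is quasi-primitive on $V$: every normal subgroup of $G_0$ acts homogeneously on $V$ (the restriction of $V$ to it is a direct sum of pairwise isomorphic irreducible modules). Structure data: subgroups $Z(E)\le U\le F\le A\le G_0$, each normal in $G_0$, and a characteristic subgroup $E$ of $F$, such that: (i) $F=EU$ is a central product with $E\cap U=Z(E)$; (ii) $F/U\cong E/Z(E)$ and $E/Z(E)$ is a direct sum of completely reducible $G_0/F$-modules (action by conjugation); (iii) $E=E_1\times\cdots\times E_s$ with $E_i$ an extraspecial $q_i$-group of order $q_i^{2m_i+1}$, the $q_i$ distinct primes and $m_i\ge 1$; $e:=\prod_i q_i^{m_i}$ (so $|E/Z(E)|=e^2$), $e\mid d$ and $\gcd(p,e)=1$; (iv) $A=C_{G_0}(U)$ and $A/F$ acts faithfully on $E/Z(E)$; (v) $U$ is cyclic and acts fixed-point-freely on $W$, an irreducible $\mathbb{F}_pU$-submodule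 of $V$; (vi) $|U|$ divides $p^k-1$ for some integer $k\ge1$, and $W$ is identified with the $\mathbb{F}_p$-span of $U$, isomorphic to $\mathbb{F}_{p^k}$, so $|W|=p^k$; (vii) $|V|=|W|^{eb}$ for some positive integer $b$, so $d=bke$. (Such data exist for every finite solvable irreducible quasi-primitive linear group, by a known structure theorem.) *)

From Stdlib Require Import Rdefinitions Rpower.
From HB Require Import structures.
From mathcomp Require Import all_boot all_order all_algebra all_fingroup all_solvable.
From mathcomp Require Import all_field all_character.
From mathcomp Require Import Rstruct.

Set Implicit Arguments.
Unset Strict Implicit.
Unset Printing Implicit Defensive.

Import GRing.Theory Num.Theory.
Local Open Scope group_scope.

Definition mx_homogeneous (F : fieldType) (gT : finGroupType) (G : {group gT})
    (n : nat) (rG : mx_representation F G n) : Prop :=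
  inhabited (mxsemisimple rG 1%:M) /\
  forall U1 U2 : 'M[F]_n, mxsimple rG U1 -> mxsimple rG U2 -> mx_iso rG U1 U2.

Definition mx_quasi_primitive (F : fieldType) (gT : finGroupType) (G : {group gT})
    (n : nat) (rG : mx_representation F G n) : Prop :=
  forall (N : {group gT}) (sNG : N \subset G),
    (N <| G)%g -> mx_homogeneous (subg_repr rG sNG).

(* E/Z(E) is completely reducible as a G0-module (action by conjugation):
   every G0-invariant subgroup Z(E) <= H <= E has a G0-invariant complement
   modulo Z(E). *)
Definition compl_reducible_quo (gT : finGroupType) (G0 E : {group gT}) : Prop :=
  forall H : {group gT},
    'Z(E) \subset H -> H \subset E -> G0 \subset 'N(H) ->
    exists K : {group gT},
      [/\ 'Z(E) \subset K, K \subset E, G0 \subset 'N(K),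
          (H * K)%g = E & H :&: K = 'Z(E)].

(* rank of the affine group V : G0 = number of G0-orbits on V (including {0}) *)
Definition affine_rank (p : nat) (gT : finGroupType) (G0 : {group gT}) (d : nat)
    (rG : mx_representation 'F_p G0 d) : nat :=
  #|[set orbit ('MR rG)%act G0 v | v : 'rV['F_p]_d]|.

Definition log2 (x : R) : R := ln x / ln 2.

(* Write U = <x>.  As U is abelian and acts homogeneously on V, a nonzero
   element of its enveloping algebra kills no nonzero vector; with U
   fixed-point-free on the simple summand W this makes the differences
   rG u - rG u' (u <> u' in U) invertible, while some polynomial of degree at
   most k = dim W annihilates rG x.  The G0-conjugates of x are then distinct
   roots of that polynomial over the matrix ring, so |G0 : A| = |x^G0| <= k.
   With |U| <= p^k - 1 and |F : U| = |E : Z(E)| = e^2 this gives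
   |G0| <= k |A : F| e^2 (p^k - 1) <= log2|W| |A : F| e^2 (|W| - 1).
   Finally 0 is a fixed point and every other orbit has at most |G0| points,
   so |W|^e - 1 <= |V| - 1 <= (rank G - 1) |G0|. *)

From Stdlib Require Import Rdefinitions Rpower Reals Lra.
From HB Require Import structures.
From mathcomp Require Import all_boot all_order all_algebra all_fingroup all_solvable.
From mathcomp Require Import all_field all_character.
From mathcomp Require Import Rstruct zify.
Import Order.TTheory GRing.Theory Num.Theory.

Set Implicit Arguments.
Unset Strict Implicit.
Unset Printing Implicit Defensive.

Section HomogeneousAbelian.
Local Open Scope group_scope.
Local Open Scope ring_scope.

Variables (K : fieldType) (gT : finGroupType) (G U : {group gT}) (n : nat).
Variables (rG : mx_representation K G n.+1) (sUG : U \subset G).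
Local Notation rU := (subg_repr rG sUG).
Local Notation E_U := (enveloping_algebra_mx rU).
Hypotheses (homU : mx_homogeneous rU) (abU : abelian U).

Lemma envelop_mx_centg A : (A \in E_U)%MS -> centgmx rU A.
Proof.
move=> EA; apply/centgmxP => y Uy.
have hom_y : (1%:M <= dom_hom_mx rU (rU y))%MS.
  by apply/hom_mxP => z Uz; rewrite !mul1mx -!repr_mxM // (centsP abU).
by have := hom_envelop_mxC hom_y EA; rewrite !mul1mx.
Qed.

Lemma envelop_mx_horner x P : x \in U -> (horner_mx (rG x) P \in E_U)%MS.
Proof.
move=> Ux; elim/poly_ind: P => [|P c IH]; first by rewrite rmorph0 linear0 sub0mx.
rewrite rmorphD rmorphM /= horner_mx_X horner_mx_C linearD /= addmx_sub //.
  exact: envelop_mxM IH (envelop_mx_id rU Ux).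
by rewrite -scalemx1 linearZ /= scalemx_sub // envelop_mx1.
Qed.

(* A simple submodule killed by [A] is isomorphic to every simple summand of
   [1%:M], and module isomorphisms commute with the enveloping algebra. *)
Lemma homog_envelop_kermx_eq0 A : (A \in E_U)%MS -> kermx A != 0 -> A = 0.
Proof.
move=> EA nzK; apply/eqP.
apply: (mxsimple_exists (kermx_centg_module (envelop_mx_centg EA)) nzK).
move=> [S simS sSK]; have [[[I Ui W simUi defW _]] isoU] := homU.
suff: (1%:M <= kermx A)%MS by rewrite sub_kermx mul1mx.
rewrite -defW; apply/sumsmx_subP => i _.
have [f _ homf defSf] := isoU _ _ simS (simUi i).
rewrite sub_kermx -submx0 -(eqmxMr A defSf) -(hom_envelop_mxC homf EA).
by move/sub_kermxP: sSK => ->; rewrite mul0mx.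
Qed.

Lemma exists_annihilating_poly (M : 'M[K]_n.+1) x :
    mxmodule rU M -> M != 0 -> x \in U ->
  exists P : {poly K}, [/\ P != 0, (size P <= (\rank M).+1)%N & horner_mx (rG x) P = 0].
Proof.
move=> modM nzM Ux; set X := rG x.
have [w0 w0M nzw0] := rowV0Pn nzM.
have powM i : (w0 *m X ^+ i <= M)%MS.
  elim: i => [|i IH]; first by rewrite expr0 mulmx1.
  by rewrite exprSr mulmxA (submx_trans (submxMr X IH)) ?(mxmoduleP modM x Ux).
pose Kr := \matrix_(i < (\rank M).+1) (w0 *m X ^+ i).
have KrM : (Kr <= M)%MS by apply/row_subP => i; rewrite rowK.
have : kermx Kr != 0.
  by rewrite kermx_eq0 /row_free; apply: contraTneq (mxrankS KrM) => ->; rewrite ltnn.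
case/rowV0Pn => c /sub_kermxP cKr nzc.
exists (rVpoly c); split; first by apply: contraNneq nzc => c0; rewrite -[c]rVpolyK c0 linear0.
  exact: size_poly.
apply: homog_envelop_kermx_eq0; first exact: envelop_mx_horner.
apply/rowV0Pn; exists w0 => //; apply/sub_kermxP.
rewrite -cKr [c *m Kr]mulmx_sum_row [rVpoly c]poly_def linear_sum mulmx_sumr.
apply: eq_bigr => i _; rewrite valK linearZ rmorphXn /= horner_mx_X.
by rewrite -scalemxAr rowK.
Qed.

Variable W : 'M[K]_n.+1.
Hypothesis simW : mxsimple rU W.
Hypothesis fpfW : forall u, u \in U -> u != 1%g ->
  forall w : 'rV[K]_n.+1, (w <= W)%MS -> w *m rG u = w -> w = 0.

Lemma repr_mx_subr1_unit u : u \in U -> u != 1%g -> rG u - 1%:M \in unitmx.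
Proof.
move=> Uu nu1; have EA : (rG u - 1%:M \in E_U)%MS.
  by have := envelop_mx_horner ('X - 1) Uu; rewrite rmorphB /= horner_mx_X rmorph1.
rewrite -row_free_unit -kermx_eq0; apply: contraT => /(homog_envelop_kermx_eq0 EA)/eqP.
rewrite subr_eq0 => /eqP rGu1; have [_ nzW _] := simW; have [w wW nzw] := rowV0Pn nzW.
by rewrite (fpfW Uu nu1 wW) ?eqxx // in nzw; rewrite rGu1 mulmx1.
Qed.

Lemma uniq_roots_repr (s : seq gT) : uniq s -> {subset s <= U} -> uniq_roots (map rG s).
Proof.
elim: s => [//|a s IHs] /= /andP[s'a uniq_s] sU.
have Ua : a \in U by rewrite sU ?mem_head.
rewrite IHs ?andbT // => [|y sy]; last by rewrite sU // inE sy orbT.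
rewrite all_map; apply/allP => y sy /=; have Uy : y \in U by rewrite sU // inE sy orbT.
have [Ga Gy] := (subsetP sUG a Ua, subsetP sUG y Uy).
rewrite /diff_roots -!mulmxE -!repr_mxM // (centsP abU) // eqxx /=.
have -> : rG y - rG a = (rG (y * a^-1)%g - 1%:M) *m rG a.
  by rewrite mulmxBl mul1mx repr_mxM ?groupV // -mulmxA -repr_mxM ?groupV // mulVg repr_mx1 mulmx1.
rewrite unitmx_mul repr_mx_unit // andbT repr_mx_subr1_unit ?groupM ?groupV //.
by apply: contraNneq s'a => /eqP; rewrite mulg_eq1 invgK => /eqP <-.
Qed.

Lemma card_class_le_rank x : x \in U -> G \subset 'N(U) -> (#|x ^: G| <= \rank W)%N.
Proof.
move=> Ux nUG; have [simW_mod nzW _] := simW.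
have [P [nzP szP rootP]] := exists_annihilating_poly simW_mod nzW Ux.
have classU : {subset x ^: G <= U}.
  by move=> _ /imsetP[g Gg ->]; rewrite memJ_norm // (subsetP nUG).
have rootJ y : y \in x ^: G -> horner_mx (rG y) P = 0.
  case/imsetP=> g Gg ->; have Gx := subsetP sUG x Ux.
  rewrite conjgE !repr_mxM ?groupV ?groupM // repr_mxV // mulmxA.
  by rewrite horner_mx_uconjC ?repr_mx_unit // rootP mulmx0 mul0mx.
have := @max_ring_poly_roots _ (map_poly scalar_mx P) (map rG (enum (x ^: G))).
rewrite map_poly_eq0 size_map_poly size_map -cardE => le_class.
rewrite -ltnS (leq_trans _ szP) // le_class //.
  rewrite all_map; apply/allP => y; rewrite mem_enum => /rootJ /=.
  by rewrite /root /horner_mx /horner_morph => ->.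
apply: uniq_roots_repr; first exact: enum_uniq.
by move=> y; rewrite mem_enum => /classU.
Qed.

Lemma indexg_cent_cyclic_le_rank : cyclic U -> G \subset 'N(U) -> (#|G : 'C_G(U)| <= \rank W)%N.
Proof.
case/cyclicP=> x defU nUG; rewrite defU cent_cycle index_cent1.
by apply: card_class_le_rank; rewrite // defU cycle_id.
Qed.

End HomogeneousAbelian.

Lemma card_add_le_orbits (aT : finGroupType) (D : {group aT}) (T : finType)
    (to : action D T) (t0 : T) :
    (forall a, a \in D -> to t0 a = t0) ->
  (#|T| + #|D| <= 1 + #|[set orbit to D v | v : T]| * #|D|)%N.
Proof.
move=> fix_t0; set P := [set orbit to D v | v : T].
have partP : partition P [set: T].
  have -> : P = [set orbit to D v | v in [set: T]].
    by apply/setP => O; apply/imsetP/imsetP => -[v _ ->]; exists v.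
  apply: orbit_partition; apply/subsetP => a Da.
  by rewrite !inE Da; apply/subsetP => t _; rewrite !inE.
have P_t0 : orbit to D t0 \in P by apply: imset_f.
have orbit_t0 : orbit to D t0 = [set t0] by apply/orbit1P/afixP => a /fix_t0.
rewrite -cardsT (card_partition partP) -sum_nat_const !(bigD1 _ P_t0) /= orbit_t0 cards1.
rewrite -addnA leq_add2l addnC leq_add2l.
by apply: leq_sum => _ /andP[/imsetP[v _ ->] _]; apply: leq_imset_card.
Qed.

Section CenterIndex.
Local Open Scope group_scope.
Variable gT : finGroupType.

Lemma indexg_center_extraspecial (q m : nat) (S : {group gT}) :
    q.-group S -> extraspecial S -> #|S| = (q ^ (2 * m + 1))%N ->
  #|S : 'Z(S)| = ((q ^ m) ^ 2)%N.
Proof.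
move=> qS esS oS; have oZ := card_center_extraspecial qS esS.
apply/eqP; rewrite -(eqn_pmul2l (cardG_gt0 'Z(S))) Lagrange ?center_sub // oZ oS.
by rewrite -expnM mulnC addn1 expnS.
Qed.

Lemma indexg_center_bigdprod (I : finType) (Es : I -> {group gT}) (E : {group gT}) :
  \big[dprod/1]_(i : I) Es i = E -> #|E : 'Z(E)| = (\prod_(i : I) #|Es i : 'Z(Es i)|)%N.
Proof.
move=> defE; apply/eqP; rewrite -(eqn_pmul2l (cardG_gt0 'Z(E))) Lagrange ?center_sub //.
rewrite -(bigdprod_card defE) -(bigdprod_card (center_bigdprod defE)) -big_split /=.
by apply/eqP/eq_bigr => i _; rewrite Lagrange ?center_sub.
Qed.

Lemma indexg_center_bigdprod_extraspecial (I : finType) (Es : I -> {group gT})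
    (q m : I -> nat) (E : {group gT}) :
    (forall i, (q i).-group (Es i)) -> (forall i, extraspecial (Es i)) ->
    (forall i, #|Es i| = q i ^ (2 * m i + 1))%N -> \big[dprod/1]_(i : I) Es i = E ->
  #|E : 'Z(E)| = ((\prod_(i : I) q i ^ m i) ^ 2)%N.
Proof.
move=> qEs esEs oEs defE; rewrite (indexg_center_bigdprod defE).
rewrite (big_morph _ (fun x y => expnMn x y 2) (exp1n 2)).
by apply: eq_bigr => i _; apply: indexg_center_extraspecial.
Qed.

End CenterIndex.

Section Log2.
Local Open Scope R_scope.

Lemma log2_pow_ge (p k : nat) : (1 < p)%N -> INR k <= log2 (INR (p ^ k)%N).
Proof.
move=> p_gt1; have ln2_gt0 : 0 < ln 2 by have := ln_lt_2; lra.
have two_le_p : 2 <= INR p by have := le_INR 2 p (elimT ssrnat.ltP p_gt1); rewrite [INR 2]/=; lra.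
have ln2_le : ln 2 <= ln (INR p).
  case: (Rle_lt_or_eq_dec _ _ two_le_p) => [lt2p | <-]; last exact: Rle_refl.
  by apply/Rlt_le/ln_increasing; lra.
have -> : INR (p ^ k)%N = INR p ^ k by rewrite RpowE !INRE natrX.
rewrite /log2 ln_pow; last by lra.
rewrite /Rdiv Rmult_assoc -{1}(Rmult_1_r (INR k)); apply: Rmult_le_compat_l; first exact: pos_INR.
rewrite -(Rinv_r (ln 2)); last by lra.
by apply: Rmult_le_compat_r => //; apply/Rlt_le/Rinv_0_lt_compat.
Qed.

End Log2.

Lemma natr_le_log2_mul (p k a b : nat) : (1 < p)%N ->
  ((k * a * b * (p ^ k - 1))%:R <= log2 (p ^ k)%:R * a%:R * b%:R * ((p ^ k)%:R - 1) :> R)%R.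
Proof.
move=> p_gt1; have := log2_pow_ge k p_gt1; rewrite !INRE => /RleP log2_ge.
rewrite !natrM natrB ?expn_gt0 ?(ltnW p_gt1) //.
by rewrite ler_wpM2r ?subr_ge0 ?ler1n ?expn_gt0 ?(ltnW p_gt1) // !ler_wpM2r.
Qed.

Lemma ceil_pred_div_le (R : archiRealFieldType) (N c r : nat) (D : R) :
    (0 < N)%N -> (0 < c)%N -> (N + c <= 1 + r * c)%N -> (c%:R <= D)%R ->
  (Num.ceil ((N%:R - 1) / D) + 1 <= r%:Z)%R.
Proof.
move=> N_gt0 c_gt0 le_Nr le_cD; have D_gt0 : (0 < D)%R by apply: lt_le_trans le_cD; rewrite ltr0n.
case: r le_Nr => [|r] le_Nr; first by lia.
rewrite -addn1 PoszD lerD2r ceil_le_int ler_pdivrMr // -pmulrn.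
apply: le_trans (ler_wpM2l (ler0n _ r) le_cD).
by rewrite lerBlDl -natrM addrC natr1 ler_nat; nia.
Qed.

Local Open Scope group_scope.

Theorem proposition2p3 (p d : nat) (gT : finGroupType) (G0 : {group gT})
  (rG : mx_representation 'F_p G0 d)
  (U F A E : {group gT}) (s : nat) (Es : 'I_s -> {group gT}) (q m : 'I_s -> nat)
  (W : 'M['F_p]_d) (sUG : U \subset G0) :
  prime p -> mx_faithful rG -> solvable G0 ->
  mx_irreducible rG -> mx_quasi_primitive rG ->
  (* Z(E) <= U <= F <= A <= G0, all normal in G0; E char F *)
  'Z(E) \subset U -> U \subset F -> F \subset A -> A \subset G0 ->
  ('Z(E) <| G0)%g -> (U <| G0)%g -> (F <| G0)%g -> (A <| G0)%g -> (E \char F)%g ->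
  (* (i) *)
  (E \* U)%g = F -> E :&: U = 'Z(E) ->
  (* (ii) *)
  (F / U)%g \isog (E / 'Z(E))%g -> compl_reducible_quo G0 E ->
  (* (iii) *)
  (forall i, prime (q i)) -> injective q -> (forall i, 0 < m i)%N ->
  (forall i, (q i).-group (Es i)) -> (forall i, extraspecial (Es i)) ->
  (forall i, #|Es i| = q i ^ (2 * m i + 1))%N ->
  \big[dprod/1%g]_(i < s) Es i = E ->
  let e := (\prod_(i < s) q i ^ m i)%N in
  (e %| d)%N -> coprime p e ->
  (* (iv) *)
  A = 'C_G0(U) ->
  [set a in A | [forall x in E, [~ x, a] \in 'Z(E)]] \subset F ->
  (* (v) *)
  cyclic U -> mxsimple (subg_repr rG sUG) W ->
  (forall u, u \in U -> u != 1%g ->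
     forall w : 'rV['F_p]_d, (w <= W)%MS -> (w *m rG u)%R = w -> w = 0%R) ->
  (* (vi), (vii) *)
  let k := \rank W in
  (#|U| %| p ^ k - 1)%N ->
  (exists b : nat, d = (b * k * e)%N) ->
  let sW := (p ^ k)%N in
  (Num.ceil (((sW ^ e)%:R - 1) /
       (log2 sW%:R * #|A : F|%:R * (e ^ 2)%:R * (sW%:R - 1)) : R) + 1
     <= (affine_rank rG)%:Z)%R.
Proof.
case: d rG W => [|n] rG W; first by move=> _ _ _ /mx_irrP[].
move=> p_pr _ _ _ qprim _ sUF sFA sAG _ nsUG _ _ _ _ _ isoFE _ _ _ _ qEs esEs oEs defE e
  _ _ defA _ cycU simW fpfW k oU [b defd].
cbv zeta; set sW := (p ^ k)%N.
have p_gt1 := prime_gt1 p_pr; have nUG := normal_norm nsUG.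
have sW_gt1 : (1 < sW)%N by rewrite -(expn0 p) ltn_exp2l // lt0n mxrank_eq0; case: simW.
have idxA : (#|G0 : A| <= k)%N.
  have homU := qprim U sUG nsUG; have abU := cyclic_abelian cycU.
  by rewrite defA (indexg_cent_cyclic_le_rank homU abU simW fpfW cycU nUG).
have idxF : #|F : U| = (e ^ 2)%N.
  rewrite -card_quotient ?(subset_trans sFA (subset_trans sAG nUG)) // (card_isog isoFE).
  rewrite card_quotient ?normal_norm ?center_normal //.
  exact: indexg_center_bigdprod_extraspecial qEs esEs oEs defE.
have oG0 : (#|G0| <= k * #|A : F| * e ^ 2 * (sW - 1))%N.
  have oU' : (#|U| <= sW - 1)%N by rewrite dvdn_leq ?subn_gt0.
  rewrite -(Lagrange sAG) -(Lagrange sFA) -(Lagrange sUF) idxF.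
  have := leq_mul (leq_mul (leq_mul oU' (leqnn (e ^ 2))) (leqnn #|A : F|)) idxA; lia.
have orbits : (p ^ n.+1 + #|G0| <= 1 + affine_rank rG * #|G0|)%N.
  have fix0 a : a \in G0 -> ('MR rG)%act 0%R a = 0%R by move=> Ga; rewrite /= mx_repr_actE ?mul0mx.
  by have := card_add_le_orbits fix0; rewrite card_mx card_Fp // mul1n.
have le_sWe : (sW ^ e <= p ^ n.+1)%N.
  rewrite -expnM defd leq_pexp2l ?prime_gt0 // -mulnA leq_pmull //.
  by case: b defd.
apply: ceil_pred_div_le (leq_trans (leq_add le_sWe (leqnn _)) orbits) _.
- by rewrite expn_gt0 ltnW.
- exact: cardG_gt0.
by rewrite (le_trans _ (natr_le_log2_mul k _ _ p_gt1)) // ler_nat.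
Qed.
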